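(* Let $A$ be a CFG-ring and let $n,m\ge 1$. (1) A subset $U\subseteq A^{n}$ is an algebraic variety if and only if $U$, equipped with the restriction of the metric $d$ of $A^n$, is a CFG-space over $B(A)$. (2) If $U\subseteq A^{n}$ and $V\subseteq A^{m}$ are algebraic varieties, a map $f:U\to V$ is a polynomial map if and only if it is contractive, i.e. $d(f(x),f(y))\le d(x,y)$ for all $x,y\in U$.
   Context: All rings are commutative with identity. A regular ring is a commutative von Neumann regular ring: every principal ideal is generated by an idempotent. For a regular ring $A$, $B(A)$ denotes the set of idempotents of $A$, which is a Boolean ring with the product of $A$ and the sum $a\tilde{+}b=(a-b)^2$; in it $a\vee b=a+b-ab$, $a\le b\iff ab=a$, $\bar a=1-a$. For $a\in A$, $e(a)$ denotes the unique idempotent with $aA=e(a)A$. For pairwise disjoint idempotents $a_1,\dots,a_k$ (i.e. $a_ia_j=0$ for $i\ne j$), $a_1\oplus\cdots\oplus a_k$ denotes their sum (which equals their join). $A^n$ carries the map $d:A^n\times A^n\to B(A)$, $d((x_1,\dots,x_n),(y_1,\dots,y_n))=e(x_1-y_1)\vee\cdots\vee e(x_n-y_n)$, which is a Boolean metric over $B(A)$. A Boolean metric space over a Boolean ring $B$ is a set $X$ with $d:X\times X\to B$ such that $d(x,y)=0\iff x=y$, $d(x,y)=d(y,x)$, and $d(x,z)\le d(x,y)\vee d(y,z)$. Given $x_1,\dots,x_k\in X$ and $a_1,\dots,a_k\in B$ with $a_1\oplus\cdots\oplus a_k=1$, an element $x\in X$ is a convex combination of the $x_i$ with coefficients $a_i$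 if $a_i d(x,x_i)=0$ for all $i$ (such $x$ is unique if it exists). $X$ is convex if every such convex combination exists in $X$. A CFG-space is a metric space $X$ over $B$ which is convex and for which there is a finite subset $F\subseteq X$ such that every element of $X$ is a convex combination of elements of $F$. A CFG-ring is a regular ring $A$ such that $A$ with the metric $d(x,y)=e(x-y)$ is a CFG-space over $B(A)$ (e.g. every $p$-ring). An algebraic variety in $A^n$ is the set of common zeros of finitely many polynomials in $A[X_1,\dots,X_n]$. A map $f:U\to V$ between algebraic varieties $U\subseteq A^n$, $V\subseteq A^m$ is a polynomial map if there are $f_1,\dots,f_m\in A[X_1,\dots,X_n]$ with $f(x)=(f_1(x),\dots,f_m(x))$ for all $x\in U$. *)

From HB Require Import structures.
From mathcomp Require Import all_boot all_order all_algebra.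
From Stdlib Require Import ClassicalEpsilon.
Set Implicit Arguments. Unset Strict Implicit. Unset Printing Implicit Defensive.
Import GRing.Theory.
Local Open Scope ring_scope.

Section Defs.
Variable A : comPzRingType.

(* idempotents, i.e. elements of B(A) *)
Definition idem (a : A) : Prop := a * a = a.

Definition same_ideal (x e : A) : Prop :=
  (exists y, x = e * y) /\ (exists z, e = x * z).

Definition regular_ring : Prop :=
  forall x : A, exists e, idem e /\ same_ideal x e.

(* e(x): the (unique, for regular A) idempotent with xA = e(x)A *)
Definition eid (x : A) : A :=
  epsilon (inhabits 0) (fun e => idem e /\ same_ideal x e).

Definition bjoin (a b : A) : A := a + b - a * b.
Definition ble (a b : A) : Prop := a * b = a.

Definition bpartition (k : nat) (a : 'I_k -> A) : Prop :=
  (forall i, idem (a i)) /\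
  (forall i j, i != j -> a i * a j = 0) /\
  \sum_(i < k) a i = 1.

(* A Boolean metric space over B(A): carrier the subset S of T, metric d *)
Definition bmetric (T : Type) (S : T -> Prop) (d : T -> T -> A) : Prop :=
  (forall x y, S x -> S y -> idem (d x y)) /\
  (forall x y, S x -> S y -> (d x y = 0 <-> x = y)) /\
  (forall x y, S x -> S y -> d x y = d y x) /\
  (forall x y z, S x -> S y -> S z -> ble (d x z) (bjoin (d x y) (d y z))).

(* x is the convex combination of the xs i with coefficients a i *)
Definition conv_comb (T : Type) (d : T -> T -> A) (k : nat)
    (xs : 'I_k -> T) (a : 'I_k -> A) (x : T) : Prop :=
  forall i, a i * d x (xs i) = 0.

Definition convex (T : Type) (S : T -> Prop) (d : T -> T -> A) : Prop :=
  forall k (xs : 'I_k -> T) (a : 'I_k -> A),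
    (forall i, S (xs i)) -> bpartition a ->
    exists x, S x /\ conv_comb d xs a x.

Definition CFG_space (T : Type) (S : T -> Prop) (d : T -> T -> A) : Prop :=
  bmetric S d /\ convex S d /\
  exists p (F : 'I_p -> T), (forall j, S (F j)) /\
    forall x, S x -> exists k (xs : 'I_k -> T) (a : 'I_k -> A),
      (forall i, exists j, xs i = F j) /\ bpartition a /\ conv_comb d xs a x.

Definition CFG_ring : Prop :=
  regular_ring /\ CFG_space (fun _ : A => True) (fun x y => eid (x - y)).

Definition vec (n : nat) := 'I_n -> A.
Definition dvec (n : nat) (x y : vec n) : A :=
  \big[bjoin/0]_(i < n) eid (x i - y i).

(* polynomials in A[X_1,...,X_n], as formal expressions *)
Inductive mpoly (n : nat) : Type :=
| PVar of 'I_n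
| PConst of A
| PAdd of mpoly n & mpoly n
| PMul of mpoly n & mpoly n.

Fixpoint peval (n : nat) (p : mpoly n) (x : vec n) : A :=
  match p with
  | PVar i => x i
  | PConst c => c
  | PAdd p q => peval p x + peval q x
  | PMul p q => peval p x * peval q x
  end.

Definition algebraic_variety (n : nat) (U : vec n -> Prop) : Prop :=
  exists k (ps : 'I_k -> mpoly n),
    forall x, U x <-> (forall i, peval (ps i) x = 0).

Definition polynomial_map (n m : nat) (U : vec n -> Prop)
    (f : vec n -> vec m) : Prop :=
  exists fs : 'I_m -> mpoly n,
    forall x, U x -> forall j, f x j = peval (fs j) x.

Definition contractive (n m : nat) (U : vec n -> Prop)
    (f : vec n -> vec m) : Prop :=
  forall x y, U x -> U y -> ble (dvec (f x) (f y)) (dvec x y).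

End Defs.

(* The proof rests on three facts.
   - Power law: A is convexly generated by p elements, so each power
     t, ..., t^(p+1) equals a generator blockwise on some partition of unity;
     on a block of the common refinement two powers meet the same generator,
     which yields a uniform M > 0 with e(t) = t^M (pigeonhole).  Hence
     every expression built from e(.) (such as 1 - d(x,u)) is a polynomial.
   - Locality of polynomials: if an element h kills x - y coordinatewise, then
     h kills P(x) - P(y) for every polynomial P.  This makes every polynomial
     map contractive and every variety convex.
   - Disjointification: idempotent-valued polynomials G_1..G_p can be
     refined into pairwise disjoint idempotent-valued polynomials C_j <= G_j
     with the same join.
   A variety is finitely generated: a generator is obtained from a vector of
   generators of A by pushing it into U along the idempotent that measures its
   failure to solve the equations.  Conversely, a CFG-space U with generators
   F_j is cut out by the single equation prod_j d(x,F_j) = 0 (convex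
   combinations being unique in a Boolean metric space), and a
   contractive map is the polynomial sum_j C_j(x) f(F_j), where C_j refines
   1 - d(x,F_j). *)

From HB Require Import structures.
From mathcomp Require Import all_boot all_order all_algebra.
From Stdlib Require Import ClassicalEpsilon Classical FunctionalExtensionality.
Set Implicit Arguments. Unset Strict Implicit. Unset Printing Implicit Defensive.
Import GRing.Theory.
Local Open Scope ring_scope.

Section Idempotents.
Variable A : comPzRingType.

Lemma idem_compl (a : A) : idem a -> idem (1 - a).
Proof. rewrite /idem => h; by rewrite mulrBl mul1r mulrBr mulr1 h subrr subr0. Qed.

Lemma idem_mul (a b : A) : idem a -> idem b -> idem (a * b).
Proof. rewrite /idem => ha hb; by rewrite mulrACA ha hb. Qed.

Lemma idem_mul_compl (a : A) : idem a -> a * (1 - a) = 0.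
Proof. rewrite /idem => h; by rewrite mulrBr mulr1 h subrr. Qed.

Lemma idem_prod (I : finType) (P : pred I) (F : I -> A) :
  (forall i, idem (F i)) -> idem (\prod_(i | P i) F i).
Proof.
move=> h; apply: (big_rec (fun x => idem x)); first by rewrite /idem mulr1.
by move=> i x _ hx; apply: idem_mul.
Qed.

Lemma idem_pow (g : A) M : idem g -> (0 < M)%N -> g ^+ M = g.
Proof.
move=> hg; case: M => // M _; elim: M => [|M IH]; first by rewrite expr1.
by rewrite exprS IH hg.
Qed.

Lemma mul_prod_compl (I : finType) (P : pred I) (h : A) (e : I -> A) :
  (forall i, P i -> h * e i = 0) -> h * \prod_(i | P i) (1 - e i) = h.
Proof.
move=> H; apply: (big_rec (fun x => h * x = h)); first by rewrite mulr1.
by move=> i x Pi hx; rewrite mulrA mulrBr mulr1 H // subr0.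
Qed.

Lemma bpartition_mul k (a : 'I_k -> A) (F : 'I_k -> A) j :
  bpartition a -> a j * \sum_(i < k) a i * F i = a j * F j.
Proof.
case=> hid [hor _]; rewrite (bigD1 j) //= mulrDr mulrA hid big_distrr /=.
by rewrite big1 ?addr0 // => i hij; rewrite mulrA hor ?mul0r // eq_sym.
Qed.

Lemma bpartition_mul_subsum k (a : 'I_k -> A) (P : pred 'I_k) j :
  bpartition a -> a j * \sum_(i | P i) a i = if P j then a j else 0.
Proof.
case=> hid [hor _]; rewrite big_distrr /=; case: ifP => Pj; last first.
  by rewrite big1 // => i Pi; rewrite hor //; apply: contraFneq Pj => ->.
rewrite (bigD1 j) //= hid big1 ?addr0 // => i /andP [_ hij].
by rewrite hor // eq_sym.
Qed.

Lemma bpartition_eq k (a : 'I_k -> A) (y z : A) :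
  bpartition a -> (forall j, a j * y = a j * z) -> y = z.
Proof.
case=> _ [_ hs] H.
rewrite -[y]mul1r -[z]mul1r -hs !big_distrl; apply: eq_bigr => j _; exact: H.
Qed.

End Idempotents.

Section ProductPartition.
Variables (A : comPzRingType) (I : finType) (p : nat) (b : I -> 'I_p -> A).
Hypothesis hb : forall i, bpartition (b i).

(* The common refinement of the partitions b i: one block per choice function. *)
Definition prod_block (c : {ffun I -> 'I_p}) : A := \prod_i b i (c i).

Lemma prod_block_le c i : prod_block c * b i (c i) = prod_block c.
Proof. by rewrite /prod_block (bigD1 i) //= mulrAC; case: (hb i) => -> _. Qed.

Lemma bpartition_prod_block :
  bpartition (fun j : 'I_#|{ffun I -> 'I_p}| => prod_block (enum_val j)).
Proof.
split; first by move=> j; apply: idem_prod => i; case: (hb i).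
split.
  move=> j j' hjj'.
  have [i hi] : exists i, enum_val j i != enum_val j' i.
    apply: NNPP => H; move: hjj'; rewrite -(inj_eq enum_val_inj) => /eqP; apply.
    apply/ffunP => i; apply/eqP; apply: NNPP => hne; apply: H; exists i; exact/negP.
  rewrite -(prod_block_le _ i) -(prod_block_le (enum_val j') i) mulrACA.
  by case: (hb i) => _ [-> // _]; rewrite mulr0.
rewrite -(big_enum_val (A := {ffun I -> 'I_p})) /= /prod_block.
rewrite -bigA_distr_bigA big1 // => i _; by case: (hb i) => _ [].
Qed.

End ProductPartition.

Section RegularRing.
Variable A : comPzRingType.
Hypothesis hreg : regular_ring A.

Lemma eid_spec (x : A) : idem (eid x) /\ same_ideal x (eid x).
Proof. exact: (@epsilon_spec A (inhabits 0) _ (hreg x)). Qed.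

Lemma eid_idem (x : A) : idem (eid x).
Proof. by case: (eid_spec x). Qed.

Lemma eid_uniq (x g : A) : idem g -> same_ideal x g -> eid x = g.
Proof.
case: (eid_spec x); move: (eid x) => g'.
rewrite /idem => hg' [[y1 e1] [z1 f1]] hg [[y2 e2] [z2 f2]].
have h1 : g * g' = g' by rewrite f1 e2 !mulrA hg.
have h2 : g' * g = g by rewrite f2 e1 !mulrA hg'.
by rewrite -h1 mulrC h2.
Qed.

Lemma mul_eid_eq0 (h x : A) : h * eid x = 0 <-> h * x = 0.
Proof.
case: (eid_spec x) => _ [[y ey] [z ez]]; split => H.
  by rewrite ey mulrA H mul0r.
by rewrite ez mulrA H mul0r.
Qed.

Lemma eid0 : eid (0 : A) = 0.
Proof. apply: eid_uniq; first by rewrite /idem mulr0. by split; exists 0; rewrite mulr0. Qed.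

Lemma eidN (x : A) : eid (- x) = eid x.
Proof.
apply: eid_uniq; first exact: eid_idem.
case: (eid_spec x) => _ [[y ey] [z ez]]; split.
  by exists (- y); rewrite {1}ey mulrN.
by exists (- z); rewrite mulrNN -ez.
Qed.

Lemma regular_reduced (y : A) M : (0 < M)%N -> y ^+ M = 0 -> y = 0.
Proof.
move=> hM hy; case: (eid_spec y) => he [[w ew] [z ez]].
have e0 : eid y = 0 by rewrite -(idem_pow he hM) ez exprMn hy mul0r.
by rewrite ew e0 mul0r.
Qed.

(* If t^M is idempotent (M > 0), it is e(t): t (1 - t^M) is nilpotent. *)
Lemma eid_expr (t : A) M : (0 < M)%N -> idem (t ^+ M) -> eid t = t ^+ M.
Proof.
move=> hM hg; apply: eid_uniq => //; split; last first.
  by exists (t ^+ M.-1); rewrite -exprS prednK.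
exists t; apply/eqP; rewrite -subr_eq0 mulrC -{1}[t]mulr1 -mulrBr.
apply/eqP/(@regular_reduced _ M hM).
by rewrite exprMn (idem_pow (idem_compl hg) hM) idem_mul_compl.
Qed.

End RegularRing.

Section VectorMetric.
Variable A : comPzRingType.
Hypothesis hreg : regular_ring A.

Lemma bjoin_compl (a b : A) : 1 - bjoin a b = (1 - a) * (1 - b).
Proof.
rewrite /bjoin mulrBl mul1r mulrBr mulr1 !opprD !opprK !addrA.
by rewrite [_ - a - b]addrAC.
Qed.

Lemma dvec_compl n (x y : vec A n) :
  1 - dvec x y = \prod_(i < n) (1 - eid (x i - y i)).
Proof.
apply: (big_morph (fun z : A => 1 - z)); last by rewrite subr0.
by move=> a b; rewrite bjoin_compl.
Qed.

Lemma dvec_def n (x y : vec A n) :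
  dvec x y = 1 - \prod_(i < n) (1 - eid (x i - y i)).
Proof. by rewrite -dvec_compl opprB addrC subrK. Qed.

Lemma dvec_idem n (x y : vec A n) : idem (dvec x y).
Proof.
rewrite dvec_def; apply/idem_compl/idem_prod => i.
exact/idem_compl/eid_idem.
Qed.

Lemma mul_dvec_eq0 n (h : A) (x y : vec A n) :
  h * dvec x y = 0 <-> forall i, h * (x i - y i) = 0.
Proof.
rewrite dvec_def mulrBr mulr1; split.
  move/eqP; rewrite subr_eq0 => /eqP H i; apply/(mul_eid_eq0 hreg).
  rewrite H (bigD1 i) //= mulrA mulrAC -(mulrA h) [(1 - _) * _]mulrC.
  by rewrite idem_mul_compl ?mulr0 ?mul0r //; exact: eid_idem.
by move=> H; rewrite mul_prod_compl ?subrr // => i _; apply/(mul_eid_eq0 hreg).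
Qed.

Lemma ble_dvec n (D : A) (x y : vec A n) :
  ble (dvec x y) D <-> forall i, (1 - D) * (x i - y i) = 0.
Proof.
rewrite -mul_dvec_eq0 /ble mulrBl mul1r [D * _]mulrC; split.
  by move=> ->; rewrite subrr.
by move/eqP; rewrite subr_eq0 => /eqP <-.
Qed.

Lemma dvec_eq0 n (x y : vec A n) : dvec x y = 0 <-> x = y.
Proof.
split => [H|->]; last first.
  by rewrite dvec_def big1 ?subrr // => i _; rewrite subrr eid0 // subr0.
have /mul_dvec_eq0 H1 : 1 * dvec x y = 0 by rewrite H mulr0.
apply: functional_extensionality => i.
by apply/eqP; rewrite -subr_eq0 -(mul1r (x i - y i)) H1.
Qed.

Lemma dvecC n (x y : vec A n) : dvec x y = dvec y x.
Proof.
rewrite !dvec_def; congr (1 - _); apply: eq_bigr => i _.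
by rewrite -[x i - y i]opprB eidN.
Qed.

Lemma bmetric_vec n (S : vec A n -> Prop) : bmetric S (@dvec A n).
Proof.
split; first by move=> *; exact: dvec_idem.
split; first by move=> *; exact: dvec_eq0.
split; first by move=> *; exact: dvecC.
move=> x y z _ _ _; apply/ble_dvec => i.
have -> : x i - z i = (x i - y i) + (y i - z i) by rewrite addrA subrK.
have kill (u v : vec A n) : (1 - dvec u v) * dvec u v = 0.
  by rewrite mulrC idem_mul_compl //; apply: dvec_idem.
move: (kill x y) (kill y z) => /mul_dvec_eq0 H1 /mul_dvec_eq0 H2.
rewrite bjoin_compl mulrDr -!mulrA H2 mulr0 addr0.
by rewrite [(1 - dvec y z) * _]mulrC mulrA H1 mul0r.
Qed.

End VectorMetric.

Section Generators.
Variables (A : comPzRingType) (T : Type) (d : T -> T -> A).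

Definition near_partition p (F : 'I_p -> T) (x : T) : Prop :=
  exists b : 'I_p -> A, bpartition b /\ forall j, b j * d x (F j) = 0.

Lemma regroup p (F : 'I_p -> T) k (xs : 'I_k -> T) (a : 'I_k -> A) (x : T) :
  bpartition a -> (forall i, exists j, xs i = F j) -> conv_comb d xs a x ->
  near_partition F x.
Proof.
move=> ha hxs hc; have [idx Hidx] := choice _ hxs.
exists (fun j => \sum_(i | idx i == j) a i); split; last first.
  move=> j; rewrite big_distrl big1 //= => i /eqP <-.
  by rewrite -Hidx; apply: hc.
split.
  move=> j; rewrite /idem big_distrl /=; apply: eq_bigr => i hi.
  by rewrite bpartition_mul_subsum // hi.
split.
  move=> j j' hjj'; rewrite big_distrl big1 //= => i /eqP hi.
  by rewrite bpartition_mul_subsum // hi (negbTE hjj').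
case: ha => _ [_ <-].
by rewrite [RHS](partition_big idx xpredT).
Qed.

Lemma CFG_generators (S : T -> Prop) : CFG_space S d ->
  exists p (F : 'I_p -> T), (forall j, S (F j)) /\
    forall x, S x -> near_partition F x.
Proof.
case=> _ [_ [p [F [hF gen]]]]; exists p, F; split => // x /gen.
by case=> k [xs [a [hxs [ha hc]]]]; apply: (regroup ha hxs hc).
Qed.

(* In a Boolean metric space convex combinations are unique:
   a_i d(x,y) <= a_i (d(x,x_i) v d(x_i,y)) = 0 on every block. *)
Lemma conv_comb_unique (S : T -> Prop) k (xs : 'I_k -> T) (a : 'I_k -> A) x y :
  bmetric S d -> S x -> S y -> (forall i, S (xs i)) -> bpartition a ->
  conv_comb d xs a x -> conv_comb d xs a y -> x = y.
Proof.
case=> _ [hd0 [hdC htri]] hx hy hxs ha hcx hcy.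
apply/(hd0 _ _ hx hy)/(bpartition_eq ha) => i; rewrite mulr0.
have h1 : a i * d x (xs i) = 0 := hcx i.
have h2 : a i * d (xs i) y = 0 by rewrite hdC //; exact: hcy.
have h12 : a i * bjoin (d x (xs i)) (d (xs i) y) = 0.
  by rewrite /bjoin mulrBr mulrDr mulrA h1 h2 mul0r addr0 subrr.
by rewrite -(htri _ _ _ hx (hxs i) hy) mulrCA h12 mulr0.
Qed.

(* Such a point is at distance 0 from some F j on every block. *)
Lemma near_partition_prod0 p (F : 'I_p -> T) (x : T) :
  near_partition F x -> \prod_(j < p) d x (F j) = 0.
Proof.
case=> b [[_ [_ hs]] hb]; rewrite -[LHS]mul1r -hs big_distrl big1 //= => j _.
by rewrite (bigD1 j) //= mulrA hb mul0r.
Qed.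

End Generators.

Section PowerLaw.
Variable A : comPzRingType.

Lemma mul_expr_periodic (c t : A) (k d M : nat) : (0 < d)%N ->
  c * t ^+ k = c * t ^+ (k + d) -> (k <= M)%N -> (d %| M)%N ->
  c * t ^+ (M + M) = c * t ^+ M.
Proof.
move=> hd hk hkM hdM.
have step a : (k <= a)%N -> c * t ^+ (a + d) = c * t ^+ a.
  move=> ha; have -> : (a + d = (k + d) + (a - k))%N by rewrite addnAC subnKC.
  by rewrite exprD mulrA -hk -mulrA -exprD subnKC.
have stepq q : c * t ^+ (M + q * d) = c * t ^+ M.
  elim: q => [|q IH]; first by rewrite mul0n addn0.
  by rewrite mulSn addnCA addnC step ?IH // (leq_trans hkM) // leq_addr.
by rewrite -{2}(divnK hdM) stepq.
Qed.

Lemma expr_collision (c t : A) N (k l : 'I_N) :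
  k != l -> c * t ^+ k.+1 = c * t ^+ l.+1 ->
  c * t ^+ (N`! + N`!) = c * t ^+ N`!.
Proof.
wlog hkl : k l / (k < l)%N.
  move=> H hne E; case: (ltngtP k l) => [hlt|hlt|/val_inj hkl].
  - exact: H hlt hne E.
  - by apply: (H l k hlt); rewrite 1?eq_sym.
  - by rewrite hkl eqxx in hne.
move=> _ E; have hlN : (l.+1 <= N`!)%N by rewrite (leq_trans (ltn_ord l)) ?fact_geq.
apply: (mul_expr_periodic (k := k.+1) (d := (l - k)%N)).
- by rewrite subn_gt0.
- by rewrite E addSn subnKC // ltnW.
- exact: leq_trans hkl (ltnW hlN).
- by rewrite dvdn_fact // subn_gt0 hkl (leq_trans (leq_subr _ _)) // ltnW.
Qed.

(* With p generators, each power t^(k+1), k <= p, is close to some generator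
   on each block of a partition; on a block of the common refinement two of
   these p+1 powers meet the same generator. *)
Lemma CFG_expr_idem : CFG_ring A ->
  exists M, (0 < M)%N /\ forall t : A, t ^+ (M + M) = t ^+ M.
Proof.
case=> hreg /CFG_generators [p [F [_ near]]].
exists (p.+1)`!; split => [|t]; first exact: fact_gt0.
have [b hb] := choice _ (fun k : 'I_p.+1 => near (t ^+ k.+1) I).
pose bp k := proj1 (hb k).
apply: (bpartition_eq (bpartition_prod_block bp)) => j.
set c := enum_val j.
have eF (k : 'I_p.+1) : prod_block b c * t ^+ k.+1 = prod_block b c * F (c k).
  rewrite -(prod_block_le bp c k) -!mulrA; congr (_ * _).
  move: (proj2 (hb k) (c k)) => /(mul_eid_eq0 hreg) /eqP.
  by rewrite mulrBr subr_eq0 => /eqP.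
have : ~~ injectiveb c.
  by apply/injectiveP => /leq_card; rewrite !card_ord ltnn.
case/injectivePn => k [l hkl ckl].
by apply: (expr_collision hkl); rewrite !eF ckl.
Qed.

Lemma eid_pow : CFG_ring A -> exists M, (0 < M)%N /\ forall t : A, eid t = t ^+ M.
Proof.
move=> hA; have [M [hM hMM]] := CFG_expr_idem hA.
exists M; split => // t; apply: (eid_expr (proj1 hA) hM).
by rewrite /idem -exprD hMM.
Qed.

End PowerLaw.

Section PolynomialExpressions.
Variables (A : comPzRingType) (n : nat).
Local Notation mp := (mpoly A n).
Local Notation pc := (@PConst A n).

Definition psub (p q : mp) : mp := PAdd p (PMul (pc (-1)) q).
Fixpoint ppow (p : mp) (k : nat) : mp :=
  if k is k'.+1 then PMul p (ppow p k') else pc 1.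
Definition psum I (r : seq I) (F : I -> mp) : mp := \big[@PAdd A n/pc 0]_(i <- r) F i.
Definition pprod I (r : seq I) (F : I -> mp) : mp := \big[@PMul A n/pc 1]_(i <- r) F i.

Lemma peval_sub p q x : peval (psub p q) x = peval p x - peval q x.
Proof. by rewrite /= mulN1r. Qed.

Lemma peval_pow p k x : peval (ppow p k) x = peval p x ^+ k.
Proof. by elim: k => [|k IH] /=; rewrite ?expr0 // IH exprS. Qed.

Lemma peval_sum I (r : seq I) F x : peval (psum r F) x = \sum_(i <- r) peval (F i) x.
Proof. exact: (big_morph (fun p => peval p x)). Qed.

Lemma peval_prod I (r : seq I) F x : peval (pprod r F) x = \prod_(i <- r) peval (F i) x.
Proof. exact: (big_morph (fun p => peval p x)). Qed.

Lemma peval_local (h : A) (x y : vec A n) (p : mp) :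
  (forall i, h * (x i - y i) = 0) -> h * peval p x = h * peval p y.
Proof.
move=> H; elim: p => [i|c|p IHp q IHq|p IHp q IHq] //=.
- by apply/eqP; rewrite -subr_eq0 -mulrBr H.
- by rewrite !mulrDr IHp IHq.
- by rewrite mulrA IHp -mulrA mulrCA IHq mulrCA mulrA.
Qed.

Lemma peval_conv k (a : 'I_k -> A) (xs : 'I_k -> vec A n) p : bpartition a ->
  peval p (fun i => \sum_(j < k) a j * xs j i) = \sum_(j < k) a j * peval p (xs j).
Proof.
move=> ha; case: (ha) => _ [_ hs].
rewrite -[LHS]mul1r -hs big_distrl /=; apply: eq_bigr => j _.
by apply: peval_local => i; rewrite mulrBr bpartition_mul // subrr.
Qed.

Lemma peval_mix (a : A) (x y : vec A n) p : idem a ->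
  peval p (fun i => a * x i + (1 - a) * y i) = a * peval p x + (1 - a) * peval p y.
Proof.
move=> ha; have hb := idem_compl ha.
have split (L : A) : L = a * L + (1 - a) * L by rewrite mulrBl mul1r addrC subrK.
rewrite [LHS]split; congr (_ + _); apply: peval_local => i.
  by rewrite mulrBr mulrDr !mulrA ha idem_mul_compl // mul0r addr0 subrr.
by rewrite mulrBr mulrDr !mulrA [(1 - a) * a]mulrC idem_mul_compl // mul0r add0r hb subrr.
Qed.

End PolynomialExpressions.

Section Disjointification.
Variables (A : comPzRingType) (n : nat).

(* Idempotent-valued polynomials G_j can be refined into pairwise disjoint
   idempotent-valued polynomials C_j <= G_j with the same join:
   C_0 = G_0 and C_(j+1) = (1 - G_0) C'_j for the refinement C' of the tail. *)
Lemma disjointify p (G : 'I_p -> mpoly A n) : exists C : 'I_p -> mpoly A n,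
  forall x, (forall j, idem (peval (G j) x)) ->
   (forall j, idem (peval (C j) x)) /\
   (forall j j', j != j' -> peval (C j) x * peval (C j') x = 0) /\
   (forall j, peval (C j) x * peval (G j) x = peval (C j) x) /\
   \sum_(j < p) peval (C j) x = 1 - \prod_(j < p) (1 - peval (G j) x).
Proof.
elim: p G => [|p IH] G.
  exists (fun _ => PConst n 0) => x _.
  by do 3!(split; first by case); rewrite !big_ord0 subrr.
have [C' HC'] := IH (fun j => G (lift ord0 j)).
pose C i := if unlift ord0 i is Some j
            then PMul (psub (PConst n 1) (G ord0)) (C' j) else G ord0.
exists C => x hG; have [hid [hor [hcg hs]]] := HC' x (fun j => hG _).
have hg0 := hG ord0; set g0 := peval (G ord0) x in hg0 *.
have hb := idem_compl hg0.
have evS j : peval (C (lift ord0 j)) x = (1 - g0) * peval (C' j) x.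
  by rewrite /C liftK /= mulN1r.
have ev0 : peval (C ord0) x = g0 by rewrite /C unlift_none.
split.
  move=> i; case: (unliftP ord0 i) => [j ->|->]; last by rewrite ev0.
  by rewrite evS; apply: idem_mul.
split.
  move=> i i'; case: (unliftP ord0 i) => [j ->|->];
    case: (unliftP ord0 i') => [j' ->|->] hne.
  - by rewrite !evS mulrACA hb hor ?mulr0 //; apply: contraNneq hne => ->.
  - by rewrite evS ev0 mulrAC [(1 - g0) * g0]mulrC idem_mul_compl // mul0r.
  - by rewrite evS ev0 mulrA idem_mul_compl // mul0r.
  - by rewrite eqxx in hne.
split.
  move=> i; case: (unliftP ord0 i) => [j ->|->]; last by rewrite ev0 hg0.
  by rewrite evS -mulrA hcg.
rewrite !big_ord_recl ev0; under eq_bigr do rewrite evS.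
rewrite -big_distrr /= hs mulrBr mulr1 addrA addrC.
by rewrite [g0 + _]addrC subrK addrC.
Qed.

End Disjointification.

Section VarietiesAreCFG.
Variables (A : comPzRingType) (n : nat).
Hypothesis hreg : regular_ring A.

(* Varieties are convex: polynomials commute with convex combinations. *)
Lemma variety_convex (U : vec A n -> Prop) :
  algebraic_variety U -> convex U (@dvec A n).
Proof.
case=> k [ps hps] kk xs a hxs ha.
exists (fun i => \sum_(j < kk) a j * xs j i); split.
  apply/hps => q; rewrite peval_conv // big1 // => j _.
  by rewrite (proj1 (hps _) (hxs j)) mulr0.
move=> j; apply/(mul_dvec_eq0 hreg) => i.
by rewrite mulrBr bpartition_mul // subrr.
Qed.

Variables (k : nat) (ps : 'I_k -> mpoly A n) (v : vec A n).
Hypothesis hv : forall q, peval (ps q) v = 0.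

Definition solved (w : vec A n) : A := \prod_(q < k) (1 - eid (peval (ps q) w)).

(* Retraction onto the zero set: keep w where it is a solution, use v elsewhere. *)
Definition retract (w : vec A n) : vec A n :=
  fun i => solved w * w i + (1 - solved w) * v i.

Lemma solved_idem w : idem (solved w).
Proof. by apply: idem_prod => q; apply/idem_compl/eid_idem. Qed.

Lemma retract_zero w q : peval (ps q) (retract w) = 0.
Proof.
rewrite /retract peval_mix; last exact: solved_idem.
rewrite hv mulr0 addr0; apply/(mul_eid_eq0 hreg).
rewrite /solved (bigD1 q) //= mulrAC [(1 - _) * _]mulrC.
by rewrite idem_mul_compl ?mul0r //; apply: eid_idem.
Qed.

Lemma retract_near (h : A) (x w : vec A n) :
  (forall q, peval (ps q) x = 0) -> (forall i, h * (x i - w i) = 0) ->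
  forall i, h * (x i - retract w i) = 0.
Proof.
move=> hx hxw i.
have hs : h * solved w = h.
  apply: mul_prod_compl => q _; apply/(mul_eid_eq0 hreg).
  by rewrite -(peval_local _ hxw) hx mulr0.
rewrite mulrBr mulrDr !mulrA hs mulrBr mulr1 hs subrr mul0r addr0 -mulrBr.
exact: hxw.
Qed.

End VarietiesAreCFG.

Section CFGRing.
Variables (A : comPzRingType) (n : nat).
Hypothesis hA : CFG_ring A.
Let hreg : regular_ring A := proj1 hA.

(* Varieties are finitely generated.  If A is generated by FA, every vector
   x is, blockwise, some vector c of generators; the retractions of these
   finitely many vectors c generate U. *)
Lemma variety_generated (U : vec A n -> Prop) : algebraic_variety U ->
  exists p (F : 'I_p -> vec A n), (forall j, U (F j)) /\
    forall x, U x -> exists k (xs : 'I_k -> vec A n) (a : 'I_k -> A),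
      (forall i, exists j, xs i = F j) /\ bpartition a /\ conv_comb (@dvec A n) xs a x.
Proof.
case=> k [ps hps].
have [[v hv]|U0] := classic (exists v, U v); last first.
  exists 0%N, (fun _ _ => 0); split => [[] //|x hx].
  by case: U0; exists x.
have [pA [FA [_ nearA]]] := CFG_generators (proj2 hA).
pose cv (c : {ffun 'I_n -> 'I_pA}) (i : 'I_n) := FA (c i).
pose F (j : 'I_#|{ffun 'I_n -> 'I_pA}|) := retract ps v (cv (enum_val j)).
exists #|{ffun 'I_n -> 'I_pA}|, F; split.
  by move=> j; apply/hps => q; apply: retract_zero => //; apply/hps.
move=> x /hps hx; have [b hb] := choice _ (fun i => nearA (x i) I).
pose bp i := proj1 (hb i).
exists _, F, (fun j => prod_block b (enum_val j)).
split; first by move=> i; exists i.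
split; first exact: bpartition_prod_block.
move=> j; apply/(mul_dvec_eq0 hreg); apply: (retract_near hreg) => // i.
rewrite -(prod_block_le bp _ i) -mulrA.
by move: (proj2 (hb i) (enum_val j i)) => /(mul_eid_eq0 hreg) ->; rewrite mulr0.
Qed.

Lemma variety_CFG (U : vec A n -> Prop) :
  algebraic_variety U -> CFG_space U (@dvec A n).
Proof.
move=> hU; split; first exact: bmetric_vec.
by split; [exact: variety_convex | exact: variety_generated].
Qed.

(* With e(t) = t^M, the idempotent 1 - d(x,u) is a polynomial in x. *)
Definition near_poly (M : nat) (u : vec A n) : mpoly A n :=
  pprod (index_enum 'I_n)
    (fun i => psub (PConst n 1) (ppow (psub (@PVar A n i) (PConst n (u i))) M)).

Variable M : nat.
Hypothesis hM : forall t : A, eid t = t ^+ M.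

Lemma peval_near_poly u x : peval (near_poly M u) x = 1 - dvec x u.
Proof.
rewrite peval_prod dvec_compl; apply: eq_bigr => i _.
by rewrite peval_sub peval_pow peval_sub /= hM.
Qed.

Lemma nearest_generator p (F : 'I_p -> vec A n) :
  exists C : 'I_p -> mpoly A n, forall x,
   (forall j, idem (peval (C j) x)) /\
   (forall j j', j != j' -> peval (C j) x * peval (C j') x = 0) /\
   (forall j, peval (C j) x * dvec x (F j) = 0) /\
   \sum_(j < p) peval (C j) x = 1 - \prod_(j < p) dvec x (F j).
Proof.
have [C HC] := disjointify (fun j => near_poly M (F j)).
exists C => x.
have hG j : idem (peval (near_poly M (F j)) x).
  by rewrite peval_near_poly; apply/idem_compl/dvec_idem.
have [hid [hor [hcg hs]]] := HC x hG.
have compl (d : A) : 1 - (1 - d) = d by rewrite opprB addrC subrK.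
do 2!split => //; split.
  move=> j; move: (hcg j); rewrite peval_near_poly mulrBr mulr1 => h.
  by rewrite -[X in X = 0](subKr (peval (C j) x)) h subrr.
by rewrite hs; under eq_bigr do rewrite peval_near_poly compl.
Qed.

End CFGRing.

Section CFGSpaces.
Variables (A : comPzRingType) (n : nat).
Hypothesis hA : CFG_ring A.
Let hreg : regular_ring A := proj1 hA.

(* A CFG-space U in A^n with generators F_j is the variety
   prod_j d(x, F_j) = 0: a solution x is the convex combination of the F_j
   with the nearest-generator coefficients, which lies in U by convexity. *)
Lemma CFG_variety (U : vec A n -> Prop) :
  CFG_space U (@dvec A n) -> algebraic_variety U.
Proof.
move=> hU; have [p [F [hF near]]] := CFG_generators hU.
case: hU => _ [hconv _].
have [M [_ hM]] := eid_pow hA; have [C HC] := nearest_generator hA hM F.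
exists 1%N, (fun _ => pprod (index_enum 'I_p)
                        (fun j => psub (PConst n 1) (near_poly M (F j)))) => x.
rewrite peval_prod; under eq_bigr do rewrite peval_sub (peval_near_poly hM) /= opprB addrC subrK.
split => [hx _|/(_ ord0) h0]; first exact/near_partition_prod0/near.
have [hid [hor [hcd hs]]] := HC x.
have hpart : bpartition (fun j => peval (C j) x) by do 2!split => //; rewrite hs h0 subr0.
have [y [hy hcy]] := hconv p F _ hF hpart.
suff -> : x = y by [].
exact: (conv_comb_unique (bmetric_vec hreg xpredT) _ _ _ hpart hcd hcy).
Qed.

Lemma polynomial_contractive m (U : vec A n -> Prop) (f : vec A n -> vec A m) :
  polynomial_map U f -> contractive U f.
Proof.
case=> fs hfs x y hx hy.
have /(ble_dvec hreg) hxy : ble (dvec x y) (dvec x y) by apply: dvec_idem.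
by apply/(ble_dvec hreg) => j; rewrite !hfs // mulrBr (peval_local _ hxy) subrr.
Qed.

(* A contractive map on a variety is the polynomial sum_l C_l(x) f(F_l),
   where the C_l choose a nearest generator F_l of U. *)
Lemma contractive_polynomial m (U : vec A n -> Prop) (f : vec A n -> vec A m) :
  algebraic_variety U -> contractive U f -> polynomial_map U f.
Proof.
move=> /(variety_CFG hA) /CFG_generators [p [F [hF near]]] hc.
have [M [_ hM]] := eid_pow hA; have [C HC] := nearest_generator hA hM F.
exists (fun j => psum (index_enum 'I_p) (fun l => PMul (C l) (PConst n (f (F l) j)))).
move=> x hx j; have [hid [hor [hcd hs]]] := HC x.
have hpart : bpartition (fun l => peval (C l) x).
  by do 2!split => //; rewrite hs (near_partition_prod0 (near x hx)) subr0.
rewrite peval_sum; apply: (bpartition_eq hpart) => l /=.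
rewrite (bpartition_mul (fun l => f (F l) j) l hpart).
have : peval (C l) x * dvec (f x) (f (F l)) = 0.
  by rewrite -(hc x (F l) hx (hF l)) mulrCA hcd mulr0.
by move/(mul_dvec_eq0 hreg)/(_ j)/eqP; rewrite mulrBr subr_eq0 => /eqP.
Qed.

End CFGSpaces.

Theorem mainTheorem1 (A : comPzRingType) (hA : CFG_ring A) (n m : nat)
    (hn : (0 < n)%N) (hm : (0 < m)%N) :
  (forall U : vec A n -> Prop,
     algebraic_variety U <-> CFG_space U (@dvec A n)) /\
  (forall (U : vec A n -> Prop) (V : vec A m -> Prop) (f : vec A n -> vec A m),
     algebraic_variety U -> algebraic_variety V ->
     (forall x, U x -> V (f x)) ->
     (polynomial_map U f <-> contractive U f)).
Proof.
split=> [U|U V f hU _ _]; split.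
- exact: variety_CFG.
- exact: CFG_variety.
- exact: polynomial_contractive.
- exact: contractive_polynomial.
Qed.
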